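(* Let $A$ and $B$ be two mobile sensor networks in a domain $D$ over the time interval $I=[0,1]$, such that the uncovered region of $A$ contains an evasion path but the uncovered region of $B$ does not. Then the uncovered regions of $A$ and $B$ are not time-varying homotopy equivalent.
   Context: A mobile sensor network in a bounded domain $D\subseteq\mathbb{R}^d$ homeomorphic to a closed ball consists of finitely many sensors with continuously varying positions $z(t)\in D$, $t\in I$, each covering an open ball $B(z(t),r)$; the covered region at time $t$ is $X_t=\big(\bigcup_z B(z(t),r)\big)\cap D$ and the covered region in spacetime is $X=\bigcup_t X_t\times\{t\}\subseteq D\times I$; the uncovered region is $X^c=(D\times I)\setminus X$, regarded as a time-varying space via projection to $I$. An evasion path is a continuous $p\colon I\to D$ with $(p(t),t)\in X^c$ for all $t\in I$. A time-varying space is a topological space with a continuous map $q$ to $I$; a time-varying map is a continuous map $f$ with $f(q_X^{-1}(t))\subseteq q_Y^{-1}(t)$ for all $t$. For $Z$ a time-varying space, $Z\times[0,1]$ is a time-varying space via $(z,j)\mapsto q(z)$; time-varying maps $h,k\colon Z\to W$ are time-varying homotopic if there is a time-varying map $F\colon Z\times[0,1]\to W$ with $F(\cdot,0)=h$, $F(\cdot,1)=k$. Time-varying spaces $X,Y$ are time-varying homotopy equivalent if there exist time-varying maps $f\colon X\to Y$, $g\colon Y\to X$ with $g\circ f$ time-varying homotopic to $\mathrm{id}_X$ and $f\circ g$ time-varying homotopic to $\mathrm{id}_Y$. *)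

From HB Require Import structures.
From mathcomp Require Import all_boot all_order all_algebra.
From mathcomp Require Import all_classical all_reals all_analysis.
Set Implicit Arguments. Unset Strict Implicit. Unset Printing Implicit Defensive.
Import Order.TTheory GRing.Theory Num.Theory.
Import numFieldNormedType.Exports.
Local Open Scope classical_set_scope.
Local Open Scope ring_scope.

Section Defs.
Variables (R : realType) (d : nat).

Definition eucl_dist2 (x y : 'rV[R]_d) : R := \sum_(i < d) (x 0 i - y 0 i) ^+ 2.

Definition closed_unit_ball : set 'rV[R]_d := [set x | eucl_dist2 x 0 <= 1].

Definition I01 : set R := [set t | 0 <= t <= 1].

Definition homeomorphic_to_closed_ball (D : set 'rV[R]_d) : Prop :=
  exists (f g : 'rV[R]_d -> 'rV[R]_d),
    {within D, continuous f} /\ {within closed_unit_ball, continuous g} /\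
    (forall x, D x -> closed_unit_ball (f x)) /\
    (forall y, closed_unit_ball y -> D (g y)) /\
    (forall x, D x -> g (f x) = x) /\
    (forall y, closed_unit_ball y -> f (g y) = y).

Record sensor_network (D : set 'rV[R]_d) := SensorNetwork {
  sn_n : nat;
  sn_pos : 'I_sn_n -> R -> 'rV[R]_d;
  sn_r : R;
  sn_r_gt0 : 0 < sn_r;
  sn_cont : forall i, {within I01, continuous (sn_pos i)};
  sn_inD : forall i t, I01 t -> D (sn_pos i t) }.

Definition covered_at (D : set 'rV[R]_d) (N : sensor_network D) (t : R) : set 'rV[R]_d :=
  [set x | D x /\ exists i, eucl_dist2 x (@sn_pos D N i t) < @sn_r D N ^+ 2].

Definition uncovered (D : set 'rV[R]_d) (N : sensor_network D) : set ('rV[R]_d * R) :=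
  [set pt | D pt.1 /\ I01 pt.2 /\ ~ covered_at N pt.2 pt.1].

Definition has_evasion_path (D : set 'rV[R]_d) (N : sensor_network D) : Prop :=
  exists p : R -> 'rV[R]_d,
    {within I01, continuous p} /\ forall t, I01 t -> uncovered N (p t, t).

(* Time-varying spaces here are subspaces X of D x I with time map q = snd. *)
Definition tv_map (X Y : set ('rV[R]_d * R)) (f : 'rV[R]_d * R -> 'rV[R]_d * R) : Prop :=
  {within X, continuous f} /\
  (forall x, X x -> Y (f x)) /\
  (forall x, X x -> (f x).2 = x.2).

Definition tv_homotopic (X Y : set ('rV[R]_d * R)) (h k : 'rV[R]_d * R -> 'rV[R]_d * R) : Prop :=
  exists F : ('rV[R]_d * R) * R -> 'rV[R]_d * R,
    {within X `*` I01, continuous F} /\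
    (forall x j, X x -> I01 j -> Y (F (x, j))) /\
    (forall x j, X x -> I01 j -> (F (x, j)).2 = x.2) /\
    (forall x, X x -> F (x, 0) = h x) /\
    (forall x, X x -> F (x, 1) = k x).

Definition tv_homotopy_equivalent (X Y : set ('rV[R]_d * R)) : Prop :=
  exists f g, tv_map X Y f /\ tv_map Y X g /\
    tv_homotopic X X (g \o f) id /\ tv_homotopic Y Y (f \o g) id.

End Defs.

(** The uncovered region of a network has an evasion path exactly when its time
    projection admits a continuous section over [I].  A time-varying map [f]
    preserves time, so it carries a section [t |-> (p t, t)] of [X] to the
    section [t |-> f (p t, t)] of [Y].  Hence already a single time-varying map
    from the uncovered region of [A] to that of [B] produces an evasion path
    for [B], whatever the shape of the domain [D]. *)
From HB Require Import structures.
From mathcomp Require Import all_boot all_order all_algebra.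
From mathcomp Require Import all_classical all_reals all_analysis.
Set Implicit Arguments. Unset Strict Implicit. Unset Printing Implicit Defensive.
Import numFieldNormedType.Exports.
Local Open Scope classical_set_scope.

Section within_continuity.
Context {T U V : topologicalType}.

Lemma within_cvg_image (A : set T) (B : set U) (p : T -> U) x :
  {within A, continuous p} -> (forall y, A y -> B (p y)) -> A x ->
  p @ within A (nbhs x) --> within B (nbhs (p x)).
Proof.
move=> /subspace_continuousP pc pAB Ax P BP.
have := pc x Ax _ BP; rewrite /= !nbhs_simpl; apply: filter_app.
by apply: filterS (withinT A _) => y /pAB By; exact.
Qed.

Lemma within_continuous_comp_in (A : set T) (B : set U) (p : T -> U) (f : U -> V) :
  {within A, continuous p} -> (forall y, A y -> B (p y)) ->
  {within B, continuous f} -> {within A, continuous (f \o p)}.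
Proof.
move=> pc pAB /subspace_continuousP fc; apply/subspace_continuousP => x Ax.
apply: cvg_comp (fc _ (pAB _ Ax)).
exact: within_cvg_image pc pAB Ax.
Qed.

Lemma within_continuous_graph (A : set T) (p : T -> U) :
  {within A, continuous p} -> {within A, continuous (fun t => (p t, t))}.
Proof.
move=> /subspace_continuousP pc; apply/subspace_continuousP => x Ax.
apply: cvg_pair; first exact: pc.
by apply: cvg_within_filter; exact: cvg_id.
Qed.

End within_continuity.

Section sections.
Variables (R : realType) (d : nat).
Implicit Types X Y : set ('rV[R]_d * R).

Definition tv_section X (p : R -> 'rV[R]_d) :=
  {within @I01 R, continuous p} /\ forall t, I01 t -> X (p t, t).

Lemma tv_map_section X Y f p : tv_map X Y f -> tv_section X p ->
  tv_section Y (fun t => (f (p t, t)).1).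
Proof.
move=> [fc [fXY ftime]] [pc pX]; split.
- apply: (@within_continuous_comp _ _ _ _ _ fst) => [z _|]; first exact: cvg_fst.
  exact: within_continuous_comp_in (within_continuous_graph pc) pX fc.
- move=> t It; have := fXY _ (pX t It); have := ftime _ (pX t It).
  by case: (f (p t, t)) => y s /= ->.
Qed.

Lemma tv_map_evasion_path (D : set 'rV[R]_d) (A B : sensor_network D) f :
  tv_map (uncovered A) (uncovered B) f -> has_evasion_path A -> has_evasion_path B.
Proof. by move=> fAB [p pA]; exists (fun t => (f (p t, t)).1); exact: tv_map_section pA. Qed.

End sections.

Theorem corollary5p4 (R : realType) (d : nat) (D : set 'rV[R]_d)
  (hD : homeomorphic_to_closed_ball D) (A B : sensor_network D) :
  has_evasion_path A -> ~ has_evasion_path B ->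
  ~ tv_homotopy_equivalent (uncovered A) (uncovered B).
Proof.
move=> evA noevB [f [_ [fAB _]]].
exact: noevB (tv_map_evasion_path fAB evA).
Qed.
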